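(* Let $F:\mathbb{R}^p\to\mathbb{R}^p$ be single-valued, $L$-Lipschitz continuous and $\rho$-co-hypomonotone for some $\rho\ge0$, i.e. $\langle Fx-Fy,x-y\rangle\ge-\rho\|Fx-Fy\|^2$ for all $x,y\in\mathrm{dom}\,F$. Let $\kappa_1,\kappa_2\ge0$, $\beta\in(0,1]$, $\eta>0$, and let $\{(x^k,y^k)\}$ be generated by: start from $x^0\in\mathrm{dom}\,F$, set $x^{-1}=y^{-1}:=x^0$, and for $k\ge0$ $$y^k:=x^k-\tfrac{\eta}{\beta}u^k,\qquad x^{k+1}:=x^k-\eta Fy^k,$$ where $u^k\in\mathbb{R}^p$ satisfies $\|Fx^k-u^k\|^2\le\kappa_1\|Fx^k-Fy^{k-1}\|^2+\kappa_2\|Fx^k-Fx^{k-1}\|^2$. Then for any $s>0$, $\omega\ge0$, $\hat\omega\ge0$ and $k\ge0$, $$\begin{aligned}&\|Fx^{k+1}\|^2+\omega\|Fx^{k+1}-Fy^k\|^2+\hat\omega\|Fx^{k+1}-Fx^k\|^2\le\|Fx^k\|^2\\&\quad-\Big[1-\tfrac{1+s}{s}\Big(\hat\omega+\tfrac{2\rho}{\eta}\Big)\Big]\|Fy^k-Fx^k\|^2+\Big[1+\omega+(1+s)\Big(\hat\omega+\tfrac{2\rho}{\eta}\Big)\Big]\tfrac{L^2\eta^2}{\beta^2}\|\beta Fy^k-u^k\|^2.\end{aligned}$$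
   Context: $F$ is $L$-Lipschitz if $\|Fx-Fy\|\le L\|x-y\|$ for all $x,y$. *)

(* R^p is modelled as row vectors 'rV[R]_p over a realType R,
   equipped with the Euclidean inner product and norm (defined below; the
   library's default norm on matrices is the sup norm, so we do not use it). *)
From HB Require Import structures.
From mathcomp Require Import all_boot all_order all_algebra.
From mathcomp Require Import reals.
Set Implicit Arguments. Unset Strict Implicit. Unset Printing Implicit Defensive.
Import Order.TTheory GRing.Theory Num.Theory.
Local Open Scope ring_scope.

Definition dotp (R : realType) (p : nat) (x y : 'rV[R]_p) : R :=
  \sum_(i < p) x ord0 i * y ord0 i.

Definition enorm (R : realType) (p : nat) (x : 'rV[R]_p) : R :=
  Num.sqrt (dotp x x).

Definition lipschitz (R : realType) (p : nat) (F : 'rV[R]_p -> 'rV[R]_p) (L : R) :=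
  forall x y, enorm (F x - F y) <= L * enorm (x - y).

Definition co_hypomonotone (R : realType) (p : nat) (F : 'rV[R]_p -> 'rV[R]_p) (rho : R) :=
  forall x y, dotp (F x - F y) (x - y) >= - rho * enorm (F x - F y) ^+ 2.

(* x^{k-1} with the convention x^{-1} := x^0 (likewise y^{-1} := x^0) *)
Definition prev_x (R : realType) (p : nat) (x : nat -> 'rV[R]_p) (k : nat) : 'rV[R]_p :=
  if k is k'.+1 then x k' else x 0%N.
Definition prev_y (R : realType) (p : nat) (x y : nat -> 'rV[R]_p) (k : nat) : 'rV[R]_p :=
  if k is k'.+1 then y k' else x 0%N.

From HB Require Import structures.
From mathcomp Require Import all_boot all_order all_algebra.
From mathcomp Require Import reals.
From mathcomp Require Import ring lra.
Import Order.TTheory GRing.Theory Num.Theory.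
Local Open Scope ring_scope.

(* Write a = F x^k, b = F y^k, c = F x^{k+1}.  The three-point identity
   ||c||^2 = ||a||^2 + 2<c - a, b> + ||c - b||^2 - ||b - a||^2 together with
   co-hypomonotonicity along the step x^k - x^{k+1} = eta b gives
   ||c||^2 <= ||a||^2 - ||b - a||^2 + ||c - b||^2 + (2 rho / eta) ||c - a||^2.
   Young's inequality splits ||c - a||^2 through b, and the Lipschitz bound
   controls ||c - b|| by ||x^{k+1} - y^k|| = (eta / beta) ||beta b - u^k||. *)

Section Euclidean.
Context {R : realType} {p : nat}.
Implicit Types (k : R) (a b c x y z : 'rV[R]_p).

Lemma dotpC x y : dotp x y = dotp y x.
Proof. by apply: eq_bigr => i _; rewrite mulrC. Qed.

Lemma dotpDl x y z : dotp (x + y) z = dotp x z + dotp y z.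
Proof. by rewrite /dotp -big_split; apply: eq_bigr => i _; rewrite mxE mulrDl. Qed.

Lemma dotpZl k x y : dotp (k *: x) y = k * dotp x y.
Proof. by rewrite /dotp mulr_sumr; apply: eq_bigr => i _; rewrite mxE mulrA. Qed.

Lemma dotpNl x y : dotp (- x) y = - dotp x y.
Proof. by rewrite -scaleN1r dotpZl mulN1r. Qed.

Lemma dotpBl x y z : dotp (x - y) z = dotp x z - dotp y z.
Proof. by rewrite dotpDl dotpNl. Qed.

Lemma dotpDr x y z : dotp x (y + z) = dotp x y + dotp x z.
Proof. by rewrite dotpC dotpDl !(dotpC x). Qed.

Lemma dotpZr k x y : dotp x (k *: y) = k * dotp x y.
Proof. by rewrite dotpC dotpZl dotpC. Qed.

Lemma dotpNr x y : dotp x (- y) = - dotp x y.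
Proof. by rewrite dotpC dotpNl dotpC. Qed.

Lemma dotpBr x y z : dotp x (y - z) = dotp x y - dotp x z.
Proof. by rewrite dotpDr dotpNr. Qed.

Lemma dotp_ge0 x : 0 <= dotp x x.
Proof. by apply: sumr_ge0 => i _; rewrite -expr2 sqr_ge0. Qed.

Lemma enorm_ge0 x : 0 <= enorm x.
Proof. exact: sqrtr_ge0. Qed.

Lemma enorm_sq x : enorm x ^+ 2 = dotp x x.
Proof. by rewrite /enorm sqr_sqrtr // dotp_ge0. Qed.

Lemma enorm_sqD x y :
  enorm (x + y) ^+ 2 = enorm x ^+ 2 + 2 * dotp x y + enorm y ^+ 2.
Proof. by rewrite !enorm_sq !(dotpDl, dotpDr) (dotpC y x); ring. Qed.

Lemma enorm_sqZ k x : enorm (k *: x) ^+ 2 = k ^+ 2 * enorm x ^+ 2.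
Proof. by rewrite !enorm_sq dotpZl dotpZr mulrA -expr2. Qed.

Lemma enorm_sqN x : enorm (- x) ^+ 2 = enorm x ^+ 2.
Proof. by rewrite -scaleN1r enorm_sqZ sqrrN expr1n mul1r. Qed.

Lemma enorm_sqBC x y : enorm (x - y) ^+ 2 = enorm (y - x) ^+ 2.
Proof. by rewrite -enorm_sqN opprB. Qed.

Lemma dotp_young x y s :
  0 < s -> 2 * dotp x y <= s * enorm x ^+ 2 + s^-1 * enorm y ^+ 2.
Proof.
move=> s_gt0; rewrite -(ler_pM2l s_gt0).
have -> : s * (s * enorm x ^+ 2 + s^-1 * enorm y ^+ 2)
          = s ^+ 2 * enorm x ^+ 2 + enorm y ^+ 2 by field; rewrite gt_eqF.
have := sqr_ge0 (enorm (s *: x - y)).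
by rewrite enorm_sqD enorm_sqZ enorm_sqN dotpZl dotpNr; lra.
Qed.

Lemma enorm_sqD_young x y s : 0 < s ->
  enorm (x + y) ^+ 2 <= (1 + s) * enorm x ^+ 2 + (1 + s) / s * enorm y ^+ 2.
Proof.
move=> s_gt0; rewrite enorm_sqD.
have := dotp_young x y s s_gt0.
have -> : (1 + s) / s = 1 + s^-1 by rewrite mulrDl mul1r mulfV ?gt_eqF // addrC.
lra.
Qed.

Lemma enorm_sq_three_point a b c :
  enorm c ^+ 2 =
  enorm a ^+ 2 + 2 * dotp (c - a) b + enorm (c - b) ^+ 2 - enorm (b - a) ^+ 2.
Proof.
rewrite !enorm_sq !(dotpBl, dotpBr) (dotpC a b) (dotpC b c); ring.
Qed.

Section Descent.
Context {a b c : 'rV[R]_p} {rho eta s omega omegah : R}.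
Hypotheses (s_gt0 : 0 < s) (omega_ge0 : 0 <= omega) (omegah_ge0 : 0 <= omegah).
Hypotheses (rho_ge0 : 0 <= rho) (eta_gt0 : 0 < eta).
Hypothesis co_hypo : eta * dotp (c - a) b <= rho * enorm (c - a) ^+ 2.

Let M := omegah + 2 * rho / eta.

Lemma descent_weight_ge0 : 0 <= M.
Proof. by rewrite /M addr_ge0 // divr_ge0 ?mulr_ge0 // ltW. Qed.

Lemma descent_bound_ge0 : 0 <= 1 + omega + (1 + s) * M.
Proof.
have s1_ge0 : 0 <= 1 + s by rewrite addr_ge0 // ltW.
by rewrite !addr_ge0 // mulr_ge0 // descent_weight_ge0.
Qed.

Lemma descent_step :
  enorm c ^+ 2 + omega * enorm (c - b) ^+ 2 + omegah * enorm (c - a) ^+ 2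
  <= enorm a ^+ 2 - (1 - (1 + s) / s * M) * enorm (b - a) ^+ 2
     + (1 + omega + (1 + s) * M) * enorm (c - b) ^+ 2.
Proof.
have cross : 2 * dotp (c - a) b <= 2 * rho / eta * enorm (c - a) ^+ 2.
  by rewrite mulrAC ler_pdivlMr // -!mulrA ler_pM2l // mulrC.
have young : M * enorm (c - a) ^+ 2 <=
    M * ((1 + s) * enorm (c - b) ^+ 2 + (1 + s) / s * enorm (b - a) ^+ 2).
  rewrite ler_wpM2l ?descent_weight_ge0 //.
  by rewrite -[c - a](subrKA b) enorm_sqD_young.
rewrite (enorm_sq_three_point a b c); rewrite /M in young *; lra.
Qed.

End Descent.
End Euclidean.

Section Operator.
Context {R : realType} {p : nat} {F : 'rV[R]_p -> 'rV[R]_p}.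

Lemma lipschitz_sq {L} : lipschitz F L ->
  forall x y, enorm (F x - F y) ^+ 2 <= L ^+ 2 * enorm (x - y) ^+ 2.
Proof.
move=> HL x y; rewrite -exprMn lerXn2r ?nnegrE ?enorm_ge0 //.
by rewrite (le_trans _ (HL x y)) ?enorm_ge0.
Qed.

Lemma co_hypomonotone_step {rho} : co_hypomonotone F rho ->
  forall x v eta,
  eta * dotp (F (x - eta *: v) - F x) v <= rho * enorm (F (x - eta *: v) - F x) ^+ 2.
Proof.
move=> Hco x v eta; have := Hco (x - eta *: v) x.
by rewrite addrAC subrr add0r dotpNr dotpZr; lra.
Qed.

End Operator.

Theorem lemma3 (R : realType) (p : nat) (F : 'rV[R]_p -> 'rV[R]_p)
  (L rho kappa1 kappa2 beta eta : R)
  (x y u : nat -> 'rV[R]_p)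
  (HL : lipschitz F L)
  (hrho : 0 <= rho) (Hco : co_hypomonotone F rho)
  (hk1 : 0 <= kappa1) (hk2 : 0 <= kappa2)
  (hb0 : 0 < beta) (hb1 : beta <= 1) (heta : 0 < eta)
  (Hy : forall k : nat, y k = x k - (eta / beta) *: u k)
  (Hx : forall k : nat, x k.+1 = x k - eta *: F (y k))
  (Hu : forall k : nat,
      enorm (F (x k) - u k) ^+ 2 <=
      kappa1 * enorm (F (x k) - F (prev_y x y k)) ^+ 2
      + kappa2 * enorm (F (x k) - F (prev_x x k)) ^+ 2) :
  forall (s omega omegah : R), 0 < s -> 0 <= omega -> 0 <= omegah ->
  forall k : nat,
    enorm (F (x k.+1)) ^+ 2
    + omega * enorm (F (x k.+1) - F (y k)) ^+ 2
    + omegah * enorm (F (x k.+1) - F (x k)) ^+ 2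
    <= enorm (F (x k)) ^+ 2
       - (1 - (1 + s) / s * (omegah + 2 * rho / eta))
           * enorm (F (y k) - F (x k)) ^+ 2
       + (1 + omega + (1 + s) * (omegah + 2 * rho / eta))
           * (L ^+ 2 * eta ^+ 2 / beta ^+ 2)
           * enorm (beta *: F (y k) - u k) ^+ 2.
Proof.
move=> s omega omegah s_gt0 omega_ge0 omegah_ge0 k.
have step := co_hypomonotone_step Hco (x k) (F (y k)) eta; rewrite -Hx in step.
apply: (le_trans (descent_step s_gt0 omegah_ge0 hrho heta step)).
rewrite lerD2l -[_ * _ * enorm _ ^+ 2]mulrA ler_wpM2l ?descent_bound_ge0 //.
have gap : x k.+1 - y k = (eta / beta) *: (u k - beta *: F (y k)).
  by rewrite Hx Hy scalerBr scalerA divfK ?gt_eqF // opprB addrC addrA subrK.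
apply: (le_trans (lipschitz_sq HL _ _)).
by rewrite gap enorm_sqZ enorm_sqBC expr_div_n !mulrA.
Qed.
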